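(* Let $H$ be a bialgebra over a field $\Bbbk$ and $C$ a left $H$-module coalgebra. There is a bijection between the set of $H$-module subcoalgebras of $C$ and the set of closed $\mathfrak{M}^H$-module subcategories of $\mathfrak{M}^C$ (under which an $H$-module subcoalgebra $D$ corresponds to the full subcategory $\mathfrak{M}^D=\{M\in\mathfrak{M}^C\mid\rho_M(M)\subset M\otimes D\}$).
   Context: A left $H$-module coalgebra is a coalgebra $C$ with left $H$-action such that $\Delta(hc)=h_{(1)}c_{(1)}\otimes h_{(2)}c_{(2)}$, $\varepsilon(hc)=\varepsilon(h)\varepsilon(c)$. An $H$-module subcoalgebra of $C$ is a subcoalgebra that is also an $H$-submodule. $\mathfrak{M}^C$ denotes right $C$-comodules; for $X$ in $\mathfrak{M}^H$ (right $H$-comodules) and $M\in\mathfrak{M}^C$, $X\otimes M\in\mathfrak{M}^C$ with coaction $x\otimes m\mapsto x_{(0)}\otimes m_{(0)}\otimes x_{(1)}m_{(1)}$. A closed subcategory of a Grothendieck category is a full subcategory closed under subobjects, quotient objects and direct sums. A closed $\mathfrak{M}^H$-module subcategory of $\mathfrak{M}^C$ is a closed subcategory $\mathcal{M}$ such that $X\otimes M\in\mathcal{M}$ for all $X\in\mathfrak{M}^H$, $M\in\mathcal{M}$. *)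

(* vector spaces over a field K are modelled as free
   K-vector spaces {malg K[I]} on a (basis) index type I (multinomials' monalg).
   Every K-vector space is free, so this is faithful up to isomorphism. *)
From HB Require Import structures.
From mathcomp Require Import all_boot all_algebra.
From mathcomp Require Import finmap.
From mathcomp Require Import monalg.
Set Implicit Arguments. Unset Strict Implicit. Unset Printing Implicit Defensive.
Import GRing.Theory.
Local Open Scope ring_scope.


Section Hopf.
Variable K : fieldType.

Definition FV (I : choiceType) := {malg K[I]}.

Definition lext {I J : choiceType} (f : I -> FV J) (v : FV I) : FV J :=
  \sum_(i <- msupp v) v@_i *: f i.

(* v (x) w  in  V (x) W = FV (I * J) *)
Definition tens {I J : choiceType} (v : FV I) (w : FV J) : FV (I * J)%type :=
  lext (fun i => lext (fun j => << (i, j) >>) w) v.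

Definition tmap {I J I' J' : choiceType} (f : FV I -> FV I') (g : FV J -> FV J')
  : FV (I * J)%type -> FV (I' * J')%type :=
  lext (fun p => tens (f << p.1 >>) (g << p.2 >>)).

Definition assocr {I J L : choiceType} : FV ((I * J) * L)%type -> FV (I * (J * L))%type :=
  lext (fun p => << (p.1.1, (p.1.2, p.2)) >>).

(* id (x) e  and  e (x) id  followed by the identification with K (x) V = V = V (x) K *)
Definition contr_r {I J : choiceType} (e : FV J -> K) : FV (I * J)%type -> FV I :=
  lext (fun p => e << p.2 >> *: << p.1 >>).
Definition contr_l {I J : choiceType} (e : FV J -> K) : FV (J * I)%type -> FV I :=
  lext (fun p => e << p.1 >> *: << p.2 >>).

Definition islin {I J : choiceType} (f : FV I -> FV J) :=
  forall (a : K) (u v : FV I), f (a *: u + v) = a *: f u + f v.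
Definition islinK {I : choiceType} (f : FV I -> K) :=
  forall (a : K) (u v : FV I), f (a *: u + v) = a * f u + f v.
Definition isbilin {I J L : choiceType} (m : FV I -> FV J -> FV L) :=
  (forall (a : K) x y z, m (a *: x + y) z = a *: m x z + m y z) /\
  (forall (a : K) x y z, m x (a *: y + z) = a *: m x y + m x z).

Definition tbil {I J L : choiceType} (m : FV I -> FV J -> FV L)
    (x : FV (I * I)%type) (y : FV (J * J)%type) : FV (L * L)%type :=
  lext (fun p => lext (fun q => tens (m << p.1 >> << q.1 >>) (m << p.2 >> << q.2 >>)) y) x.

Definition is_coalgebra {J : choiceType} (d : FV J -> FV (J * J)%type) (e : FV J -> K) :=
  [/\ islin d, islinK e,
      (forall c, assocr (tmap d id (d c)) = tmap id d (d c)),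
      (forall c, contr_l e (d c) = c) &
      (forall c, contr_r e (d c) = c)].

Definition is_bialgebra {B : choiceType} (m : FV B -> FV B -> FV B) (u : FV B)
    (d : FV B -> FV (B * B)%type) (e : FV B -> K) :=
  [/\ isbilin m,
      (forall x y z, m (m x y) z = m x (m y z)),
      (forall x, m u x = x /\ m x u = x),
      is_coalgebra d e &
      [/\ (forall x y, d (m x y) = tbil m (d x) (d y)),
          d u = tens u u,
          (forall x y, e (m x y) = e x * e y) &
          e u = 1]].

Definition is_module_coalgebra {B J : choiceType} (m : FV B -> FV B -> FV B) (u : FV B)
    (dH : FV B -> FV (B * B)%type) (eH : FV B -> K)
    (dC : FV J -> FV (J * J)%type) (eC : FV J -> K) (act : FV B -> FV J -> FV J) :=
  [/\ isbilin act,
      (forall h g c, act (m h g) c = act h (act g c)),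
      (forall c, act u c = c),
      (forall h c, dC (act h c) = tbil act (dH h) (dC c)) &
      (forall h c, eC (act h c) = eH h * eC c)].

Definition is_comodule {J I : choiceType} (d : FV J -> FV (J * J)%type) (e : FV J -> K)
    (rho : FV I -> FV (I * J)%type) :=
  [/\ islin rho,
      (forall x, assocr (tmap rho id (rho x)) = tmap id d (rho x)) &
      (forall x, contr_r e (rho x) = x)].

(* objects of M^C: a space with a (candidate) coaction *)
Record comod (J : choiceType) := Comod {
  cI : choiceType;
  crho : FV cI -> FV (cI * J)%type }.
Arguments crho {J} c _.

Definition is_comod {J : choiceType} (d : FV J -> FV (J * J)%type) (e : FV J -> K) (M : comod J) := is_comodule d e (crho M).

Definition is_comod_mor {J : choiceType} (M N : comod J) (f : FV (cI M) -> FV (cI N)) :=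
  islin f /\ forall x, crho N (f x) = tmap f id (crho M x).

Arguments is_comod_mor {J} M N f.

(* direct sum of a family of comodules (basis = disjoint union of bases) *)
Definition dsum {J : choiceType} {T : choiceType} (F : T -> comod J) : comod J :=
  @Comod J {i : T & cI (F i)}
    (lext (fun p : {i : T & cI (F i)} =>
       tmap (lext (fun x : cI (F (tag p)) => << @Tagged T (tag p) (fun i => cI (F i)) x >>))
            id (crho (F (tag p)) << tagged p >>))).

(* X (x) M for X a right H-comodule (basis IX, coaction rhoX) and M in M^C:
   x (x) m |-> x_(0) (x) m_(0) (x) x_(1) m_(1) *)
Definition ctens {B J : choiceType} (act : FV B -> FV J -> FV J)
    (IX : choiceType) (rhoX : FV IX -> FV (IX * B)%type) (M : comod J) : comod J :=
  @Comod J (IX * cI M)%type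
    (lext (fun p : (IX * cI M)%type =>
       lext (fun a => lext (fun b => tens << (a.1, b.1) >> (act << a.2 >> << b.2 >>))
                          (crho M << p.2 >>))
            (rhoX << p.1 >>))).

Definition in_tens {I J : choiceType} (D : FV J -> Prop) (x : FV (I * J)%type) :=
  exists s : seq (FV I * FV J), (forall p, p \in s -> D p.2) /\
    x = \sum_(p <- s) tens p.1 p.2.
Definition in_tens2 {J : choiceType} (D : FV J -> Prop) (x : FV (J * J)%type) :=
  exists s : seq (FV J * FV J), (forall p, p \in s -> D p.1 /\ D p.2) /\
    x = \sum_(p <- s) tens p.1 p.2.

Definition is_Hsubcoalg {B J : choiceType} (dC : FV J -> FV (J * J)%type)
    (act : FV B -> FV J -> FV J) (D : FV J -> Prop) :=
  [/\ D 0, (forall (a : K) x y, D x -> D y -> D (a *: x + y)),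
      (forall c, D c -> in_tens2 D (dC c)) &
      (forall h c, D c -> D (act h c))].

Definition comodD {J : choiceType} (d : FV J -> FV (J * J)%type) (e : FV J -> K) (D : FV J -> Prop) : comod J -> Prop :=
  fun M => is_comod d e M /\ forall x, in_tens D (crho M x).

(* closed M^H-module subcategories of M^C (given by their class of objects) *)
Definition is_closed_Hmod {B J : choiceType} (dC : FV J -> FV (J * J)%type) (eC : FV J -> K)
    (dH : FV B -> FV (B * B)%type) (eH : FV B -> K) (act : FV B -> FV J -> FV J)
    (P : comod J -> Prop) :=
  [/\ (forall M, P M -> is_comod dC eC M),
      (forall M N f, is_comod dC eC M -> is_comod dC eC N -> is_comod_mor N M f ->
         injective f -> P M -> P N),
      (forall M N f, is_comod dC eC M -> is_comod dC eC N -> is_comod_mor M N f ->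
         (forall y, exists x, f x = y) -> P M -> P N),
      (forall (T : choiceType) (F : T -> comod J), (forall i, P (F i)) -> P (dsum F)) &
      (* M^H-module subcategory *)
      (forall (IX : choiceType) (rhoX : FV IX -> FV (IX * B)%type) M,
         is_comodule dH eH rhoX -> P M -> P (ctens act rhoX M))].

End Hopf.

(** An H-module subcoalgebra D gives the subcategory M^D, which is closed under
    subobjects, quotients and direct sums because membership is read off the
    coefficients of the coaction, rho(M) in M (x) D, and closed under X (x) - because
    the coefficients of X (x) M are the products h c of coefficients of X and of M.
    D is recovered from M^D: D itself, with coaction Delta, lies in M^D, and
    c = (eps (x) id) Delta(c).  Conversely, a closed M^H-module subcategory P gives the
    span D of the matrix coefficients (phi (x) id) rho_N(n) of the objects N of P; it
    is a subcoalgebra, and an H-submodule because H (x) N lies in P.  Clearly P is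
    contained in M^D.  If M lies in M^D, the coefficients of M all come from a direct
    sum S of objects of P; the image Q of S in the cofree comodule M (x) C is in P as
    a quotient of S, and it contains rho(M), a copy of M, so M is in P as a subobject
    of Q.  Subspaces are turned into objects by choosing bases with Zorn's lemma. *)

From HB Require Import structures.
From mathcomp Require Import all_boot all_algebra.
From mathcomp Require Import finmap monalg.
From mathcomp Require Import boolp.
From mathcomp Require classical_sets.
Set Implicit Arguments. Unset Strict Implicit. Unset Printing Implicit Defensive.
Import GRing.Theory.
Local Open Scope ring_scope.

(** * Linear maps between free vector spaces *)

Section FreeSpaces.
Variable K : fieldType.
Local Notation V I := (FV K I).
Implicit Types I J L : choiceType.

Lemma lextE_fsubset I J (f : I -> V J) v (d : {fset I}) : (msupp v `<=` d)%fset ->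
  lext f v = \sum_(i <- d) v@_i *: f i.
Proof.
move=> sd; rewrite /lext (big_fset_incl _ sd) // => x _ /mcoeff_outdom ->.
by rewrite scale0r.
Qed.

Lemma lext_lin I J (f : I -> V J) : islin (lext f).
Proof.
move=> a u v; set d := (msupp u `|` msupp v)%fset.
have sv : (msupp (a *: u + v) `<=` d)%fset.
  by apply: fsubset_trans (msuppD_le _ _) _; rewrite fsetSU // msuppZ_le.
rewrite (lextE_fsubset f sv) (@lextE_fsubset _ _ f u d) ?fsubsetUl //.
rewrite (@lextE_fsubset _ _ f v d) ?fsubsetUr // scaler_sumr -big_split /=.
by apply: eq_bigr => i _; rewrite mcoeffD mcoeffZ scalerDl scalerA.
Qed.

Lemma lextU I J (f : I -> V J) i : lext f << i >> = f i.
Proof.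
by rewrite (@lextE_fsubset _ _ f _ [fset i]%fset) ?msuppU_le // big_seq_fset1 mcoeffUU scale1r.
Qed.

Lemma eq_lext I J (f g : I -> V J) v : f =1 g -> lext f v = lext g v.
Proof. by move=> fg; apply: eq_bigr => i _; rewrite fg. Qed.

Lemma lext_basis I (v : V I) : lext (fun i => << i >>) v = v.
Proof.
rewrite [RHS]monalgE; apply: eq_bigr => i _.
by apply/malgP => k; rewrite mcoeffZ !mcoeffU mulr_natr.
Qed.

Section Linear.
Variables (I J : choiceType) (F : V I -> V J).
Hypothesis linF : islin F.

Lemma linD u v : F (u + v) = F u + F v.
Proof. by rewrite -[u]scale1r linF !scale1r. Qed.
Lemma lin0 : F 0 = 0.
Proof. by apply: (addrI (F 0)); rewrite -linD !addr0. Qed.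
Lemma linZ a u : F (a *: u) = a *: F u.
Proof. by rewrite -[a *: u]addr0 linF lin0 addr0. Qed.
Lemma linB u v : F (u - v) = F u - F v.
Proof. by rewrite addrC -scaleN1r linF scaleN1r addrC. Qed.
Lemma lin_sum (T : Type) (s : seq T) (P : pred T) (G : T -> V I) :
  F (\sum_(t <- s | P t) G t) = \sum_(t <- s | P t) F (G t).
Proof.
elim: s => [|x s IH]; first by rewrite !big_nil lin0.
by rewrite !big_cons; case: (P x); rewrite ?linD IH.
Qed.
Lemma lin_lext L (f : L -> V I) v : F (lext f v) = lext (fun i => F (f i)) v.
Proof. by rewrite /lext lin_sum; apply: eq_bigr => i _; rewrite linZ. Qed.
Lemma lin_basis v : F v = lext (fun i => F << i >>) v.
Proof. by rewrite -{1}(lext_basis v) lin_lext. Qed.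
End Linear.

Lemma lin_eq I J (F G : V I -> V J) : islin F -> islin G ->
  (forall i, F << i >> = G << i >>) -> forall v, F v = G v.
Proof. by move=> linF linG e v; rewrite (lin_basis linF) (lin_basis linG); apply: eq_lext. Qed.

Lemma linK_basis I (F : V I -> K) : islinK F ->
  forall v, F v = \sum_(i <- msupp v) v@_i * F << i >>.
Proof.
move=> linF; have linF0 : F 0 = 0.
  by apply: (addrI (F 0)); have := linF 1 0 0; rewrite scale1r mul1r !addr0.
move=> v; rewrite -{1}(lext_basis v) /lext.
elim: (enum_fset (msupp v)) => [|i s IH]; first by rewrite !big_nil linF0.
by rewrite !big_cons -IH -linF.
Qed.

Lemma linK_eq I (F G : V I -> K) : islinK F -> islinK G ->
  (forall i, F << i >> = G << i >>) -> forall v, F v = G v.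
Proof.
move=> linF linG e v; rewrite (linK_basis linF) (linK_basis linG).
by apply: eq_bigr => i _; rewrite e.
Qed.

Lemma islin_id I : islin (fun x : V I => x).
Proof. by []. Qed.
Lemma islin0 I J : islin (fun _ : V I => 0 : V J).
Proof. by move=> a u v; rewrite scaler0 addr0. Qed.
Lemma islin_comp I J L (g : V J -> V L) (f : V I -> V J) :
  islin g -> islin f -> islin (fun x => g (f x)).
Proof. by move=> linG linF a u v; rewrite linF linG. Qed.
Lemma islinK_comp I J (g : V J -> K) (f : V I -> V J) :
  islinK g -> islin f -> islinK (fun x => g (f x)).
Proof. by move=> linG linF a u v; rewrite linF linG. Qed.
Lemma islin_lext_fun I J L (F : V I -> L -> V J) (u : V L) :
  (forall l, islin (fun v => F v l)) -> islin (fun v => lext (F v) u).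
Proof.
move=> linF a x y; rewrite /lext scaler_sumr -big_split /=; apply: eq_bigr => l _.
by rewrite linF scalerDr !scalerA mulrC.
Qed.
Lemma islin_sub I J (F G : V I -> V J) : islin F -> islin G -> islin (fun x => F x - G x).
Proof.
move=> linF linG a u v; rewrite linF linG opprD scalerBr.
by rewrite addrACA.
Qed.
Lemma islin_scale I J (F : V I -> V J) c : islin F -> islin (fun x => c *: F x).
Proof. by move=> linF a u v; rewrite linF scalerDr !scalerA mulrC. Qed.
Lemma islin_scalK I J (F : V I -> K) (y : V J) : islinK F -> islin (fun x => F x *: y).
Proof. by move=> linF a u v; rewrite linF scalerDl scalerA. Qed.
Lemma islinK_coef I (i : I) : islinK (fun v : V I => v@_i).
Proof. by move=> a u v; rewrite mcoeffD mcoeffZ. Qed.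

Lemma islin_tens_l I J L (f : V L -> V I) (y : V J) : islin f -> islin (fun x => tens (f x) y).
Proof. by move=> linF; apply: islin_comp linF; apply: lext_lin. Qed.
Lemma islin_tens_r I J L (x : V I) (f : V L -> V J) : islin f -> islin (fun y => tens x (f y)).
Proof.
move=> linF; apply: islin_comp linF.
by apply: islin_lext_fun => i; apply: lext_lin.
Qed.

End FreeSpaces.

Create HintDb linear.

(* [type of g] fails exactly when the pattern variable [g] captured the bound [x]. *)
Ltac linearity :=
  lazymatch goal with
  | |- islin (fun x => x) => exact: islin_id
  | |- islin (fun _ => 0) => exact: islin0
  | |- islin (fun x => @?F x - @?G x) =>
      refine (islin_sub (F := F) (G := G) _ _); linearity
  | |- islin (fun x => tens (@?f x) (@?g x)) =>
      lazymatch g with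
      | (fun _ => ?y) => refine (islin_tens_l (f := f) y _); linearity
      | _ => lazymatch f with (fun _ => ?y) => refine (islin_tens_r (f := g) y _); linearity end
      end
  | |- islin (fun x => (@?c x) *: (@?F x)) =>
      lazymatch c with
      | (fun _ => ?c0) => refine (islin_scale (F := F) c0 _); linearity
      | _ => lazymatch F with (fun _ => ?y) => refine (islin_scalK (F := c) y _); linearity end
      end
  | |- islin (fun x => lext (@?F x) (@?u x)) =>
      lazymatch u with
      | (fun _ => ?u0) => refine (islin_lext_fun (F := F) u0 _); intro; cbv beta; linearity
      | _ => lazymatch F with
             | (fun _ => ?F0) => refine (islin_comp (g := lext F0) (f := u) _ _); linearity
             end
      end
  | |- islin (fun x => ?m (@?f x) (@?c x)) =>
      lazymatch c with
      | (fun _ => ?c0) =>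
          tryif (let _ := type of m in idtac) then
            lazymatch f with
            | (fun x => x) => linearity_fallback
            | _ => refine (islin_comp (g := fun h => m h c0) (f := f) _ _); linearity
            end
          else linearity_app
      | _ => linearity_app
      end
  | |- islin (fun x => _ _) => linearity_app
  | |- islinK (fun x => ?g (@?f x)) =>
      tryif (let _ := type of g in idtac) then
        lazymatch f with
        | (fun x => x) => change (islinK g); linearity_fallback
        | _ => refine (islinK_comp (g := g) (f := f) _ _); linearity
        end
      else linearity_fallback
  | |- islin _ => linearity_fallback
  | |- islinK _ => linearity_fallback
  end
with linearity_app :=
  lazymatch goal with
  | |- islin (fun x => ?g (@?f x)) =>
      tryif (let _ := type of g in idtac) then
        lazymatch f with
        | (fun x => x) => change (islin g); linearity_fallback
        | _ => refine (islin_comp (g := g) (f := f) _ _); linearity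
        end
      else linearity_fallback
  end
with linearity_fallback :=
  first [ assumption | solve [eauto 4 with linear] | progress autounfold with linear; linearity ].

#[export] Hint Resolve lext_lin islinK_coef : linear.

Ltac lin_ext :=
  lazymatch goal with
  | |- forall x, @?L x = @?R x =>
      apply: (lin_eq (F := L) (G := R)); [linearity | linearity | ]
  end.

Section Tensors.
Variable K : fieldType.
Local Notation V I := (FV K I).
Implicit Types I J L : choiceType.

Definition assocl {I J L} : V (I * (J * L))%type -> V ((I * J) * L)%type :=
  lext (fun p => << ((p.1, p.2.1), p.2.2) >>).

Lemma islin_tmap I J I' J' (f : V I -> V I') (g : V J -> V J') : islin (tmap f g).
Proof. exact: lext_lin. Qed.
Lemma islin_assocr I J L : islin (@assocr K I J L).
Proof. exact: lext_lin. Qed.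
Lemma islin_assocl I J L : islin (@assocl I J L).
Proof. exact: lext_lin. Qed.
Lemma islin_contr_r I J e : islin (@contr_r K I J e).
Proof. exact: lext_lin. Qed.
Lemma islin_contr_l I J e : islin (@contr_l K I J e).
Proof. exact: lext_lin. Qed.
Lemma islin_tens I J (x : V I) : islin (@tens K I J x).
Proof. exact: (@islin_tens_r _ _ _ _ x id). Qed.
Local Hint Resolve islin_tens islin_tmap islin_assocr islin_assocl : linear.
Local Hint Resolve islin_contr_r islin_contr_l : linear.

Lemma tensU I J i j : tens (<< i >> : V I) (<< j >> : V J) = << (i, j) >>.
Proof. by rewrite /tens !lextU. Qed.

Lemma tensZl I J a (x : V I) (y : V J) : tens (a *: x) y = a *: tens x y.
Proof. by apply: linZ; linearity. Qed.
Lemma tensZr I J a (x : V I) (y : V J) : tens x (a *: y) = a *: tens x y.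
Proof. by apply: linZ; linearity. Qed.
Lemma tens0r I J (x : V I) : tens x (0 : V J) = 0.
Proof. by apply: lin0; linearity. Qed.

Lemma tmapU I J I' J' (f : V I -> V I') (g : V J -> V J') i j :
  tmap f g << (i, j) >> = tens (f << i >>) (g << j >>).
Proof. exact: lextU. Qed.

Lemma tmap_tens I J I' J' (f : V I -> V I') (g : V J -> V J') x y :
  islin f -> islin g -> tmap f g (tens x y) = tens (f x) (g y).
Proof.
move=> linF linG; move: x; lin_ext => i /=; move: y; lin_ext => j /=.
by rewrite tensU tmapU.
Qed.

Lemma eq_tmap I J I' J' (f f' : V I -> V I') (g g' : V J -> V J') z :
  (forall i, f << i >> = f' << i >>) -> (forall j, g << j >> = g' << j >>) ->
  tmap f g z = tmap f' g' z.
Proof. by move=> ef eg; apply: eq_lext => p; rewrite ef eg. Qed.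

Lemma tmap_id I J (z : V (I * J)%type) : tmap id id z = z.
Proof. by move: z; lin_ext => -[i j]; rewrite tmapU tensU. Qed.

Lemma tmap_comp I J I1 J1 I2 J2 (f : V I1 -> V I2) (g : V J1 -> V J2)
    (f' : V I -> V I1) (g' : V J -> V J1) z :
  islin f -> islin g -> islin f' -> islin g' ->
  tmap f g (tmap f' g' z) = tmap (fun x => f (f' x)) (fun y => g (g' y)) z.
Proof. by move=> *; move: z; lin_ext => -[i j] /=; rewrite !tmapU tmap_tens. Qed.

Lemma tmap_split I J I' J' (f : V I -> V I') (g : V J -> V J') z :
  islin f -> islin g -> tmap f g z = tmap f id (tmap id g z).
Proof. by move=> linF linG; rewrite tmap_comp //; linearity. Qed.

Lemma assocr_tens I J L (x : V I) (y : V J) (z : V L) :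
  assocr (tens (tens x y) z) = tens x (tens y z).
Proof.
move: x; lin_ext => i /=; move: y; lin_ext => j /=; move: z; lin_ext => k /=.
by rewrite !tensU /assocr lextU.
Qed.

Lemma assocl_tens I J L (x : V I) (y : V J) (z : V L) :
  assocl (tens x (tens y z)) = tens (tens x y) z.
Proof.
move: x; lin_ext => i /=; move: y; lin_ext => j /=; move: z; lin_ext => k /=.
by rewrite !tensU /assocl lextU.
Qed.

Lemma assocl_tens_tmap I J L I' (x : V L) (h : V I -> V I') (z : V (I * J)%type) :
  islin h -> assocl (tens x (tmap h id z)) = tmap (fun w => tens x (h w)) id z.
Proof. by move=> linH; move: z; lin_ext => -[i j] /=; rewrite !tmapU assocl_tens. Qed.

Lemma assocrK I J L : cancel (@assocr K I J L) assocl.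
Proof. by rewrite /cancel; lin_ext => -[[i j] k]; rewrite /assocr /assocl !lextU. Qed.

Lemma assocr_tmap I J L I' J' L' (f : V I -> V I') (g : V J -> V J') (h : V L -> V L') z :
  islin f -> islin g -> islin h ->
  assocr (tmap (tmap f g) h z) = tmap f (tmap g h) (assocr z).
Proof.
move=> *; move: z; lin_ext => -[[i j] k] /=.
by rewrite !tmapU assocr_tens /assocr lextU /= !tmapU.
Qed.

Lemma contr_r_tens I J (e : V J -> K) (x : V I) (y : V J) :
  islinK e -> contr_r e (tens x y) = e y *: x.
Proof.
move=> linE; move: x; lin_ext => i /=; move: y; lin_ext => j.
by rewrite tensU /contr_r lextU.
Qed.

Lemma contr_l_tens I J (e : V J -> K) (x : V J) (y : V I) :
  islinK e -> contr_l e (tens x y) = e x *: y.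
Proof.
move=> linE; move: x; lin_ext => i /=; move: y; lin_ext => j.
by rewrite tensU /contr_l lextU.
Qed.

Lemma contr_l_tmap I J J' (e : V J' -> K) (f : V J -> V J') (z : V (J * I)%type) :
  islinK e -> islin f -> contr_l e (tmap f id z) = contr_l (fun x => e (f x)) z.
Proof.
move=> linE linF; move: z; lin_ext => -[j i] /=.
by rewrite tmapU contr_l_tens // /contr_l lextU.
Qed.

Lemma contr_r_tmap I J I' (e : V J -> K) (f : V I -> V I') z :
  islinK e -> islin f -> contr_r e (tmap f id z) = f (contr_r e z).
Proof.
move=> linE linF; move: z; lin_ext => -[i j] /=.
by rewrite tmapU contr_r_tens // /contr_r lextU linZ.
Qed.

End Tensors.
Arguments assocl {K I J L} _.
#[export] Hint Resolve islin_tens islin_tmap islin_assocr islin_assocl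
  islin_contr_r islin_contr_l : linear.
#[export] Hint Unfold tbil : linear.

Section Rows.
Variable K : fieldType.
Local Notation V I := (FV K I).
Implicit Types I J L : choiceType.

Definition coef {I J} (phi : I -> K) : V (I * J)%type -> V J :=
  lext (fun p => phi p.1 *: << p.2 >>).
Definition trow {I J} (i : I) : V (I * J)%type -> V J := coef (fun k => (k == i)%:R).
Definition tcol {I J} (j : J) : V (I * J)%type -> V I := contr_r (fun w => w@_j).
Definition fsts {I J} (z : V (I * J)%type) : {fset I} := [fset p.1 | p in msupp z]%fset.

Lemma islin_coef I J phi : islin (@coef I J phi).
Proof. exact: lext_lin. Qed.
Lemma islin_trow I J i : islin (@trow I J i).
Proof. exact: lext_lin. Qed.
Lemma islin_tcol I J j : islin (@tcol I J j).
Proof. exact: lext_lin. Qed.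
Local Hint Resolve islin_coef islin_trow islin_tcol : linear.

Lemma coef_tensU I J (phi : I -> K) i (y : V J) : coef phi (tens << i >> y) = phi i *: y.
Proof. by move: y; lin_ext => j; rewrite tensU /coef lextU. Qed.

Lemma trow_tens I J i (x : V I) (y : V J) : trow i (tens x y) = x@_i *: y.
Proof. by move: x; lin_ext => k; rewrite /trow coef_tensU mcoeffU. Qed.

Lemma tens_trowsE I J (z : V (I * J)%type) (d : {fset I}) :
  (forall p, p \in msupp z -> p.1 \in d) -> z = \sum_(i <- d) tens << i >> (trow i z).
Proof.
move=> zd; rewrite -[LHS]lext_basis /lext.
under [RHS]eq_bigr => i _ do
  rewrite (lin_basis (islin_trow i) z) /lext (lin_sum (islin_tens _)).
rewrite exchange_big /= big_seq [RHS]big_seq; apply: eq_bigr => -[a b] /zd /= ad.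
under eq_bigr => i _ do rewrite tensZr -tensU trow_tens.
rewrite -scaler_sumr (big_fsetD1 a) //= big1_fset ?addr0.
  by rewrite mcoeffU eqxx scale1r tensU.
move=> k; rewrite in_fsetD1 => /andP[ka _] _.
by rewrite mcoeffU eq_sym (negbTE ka) scale0r tens0r.
Qed.

Lemma fstsP I J (z : V (I * J)%type) p : p \in msupp z -> p.1 \in fsts z.
Proof. by move=> pz; apply/imfsetP; exists p. Qed.

Lemma tmap_trows I J I' (f : V I -> V I') (z : V (I * J)%type) :
  islin f -> tmap f id z = \sum_(i <- fsts z) tens (f << i >>) (trow i z).
Proof.
move=> linF; rewrite {1}(@tens_trowsE _ _ z (fsts z)); last exact: fstsP.
by rewrite (lin_sum (islin_tmap _ _)); apply: eq_bigr => i _; rewrite tmap_tens.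
Qed.

Lemma trow_tmap_id I J J' (g : V J -> V J') k (z : V (I * J)%type) :
  islin g -> trow k (tmap id g z) = g (trow k z).
Proof. by move=> linG; move: z; lin_ext => -[i j] /=; rewrite tmapU -tensU !trow_tens linZ. Qed.

Lemma mcoeff_tcol I J (z : V (I * J)%type) i j : (tcol j z)@_i = z@_(i, j).
Proof.
move: z; apply: linK_eq; [linearity | exact: islinK_coef | move=> [a b]].
rewrite /tcol /contr_r lextU /= mcoeffZ !mcoeffU xpair_eqE.
by case: (a == i); case: (b == j); rewrite ?mulr1 ?mulr0.
Qed.

Lemma tmap_inj I J I' (f : V I -> V I') :
  islin f -> injective f -> injective (@tmap K I J I' J f id).
Proof.
move=> linF injF z z' e; apply/malgP => -[i j]; rewrite -!mcoeff_tcol.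
have tcol_tmap w : tcol j (tmap f id w) = f (tcol j w).
  by apply: contr_r_tmap; [exact: islinK_coef | exact: linF].
by congr (_@_i); apply: injF; rewrite -!tcol_tmap e.
Qed.

Lemma coef_assocr I J L (phi : I -> K) (w : V ((I * J) * L)%type) :
  coef phi (assocr w) = tmap (coef phi) id w.
Proof.
move: w; lin_ext => -[[i j] k] /=.
by rewrite /assocr lextU tmapU /coef !lextU /= tensZl tensU.
Qed.

Lemma coef_tmap_id I J J' (phi : I -> K) (g : V J -> V J') (z : V (I * J)%type) :
  islin g -> coef phi (tmap id g z) = g (coef phi z).
Proof.
by move=> linG; move: z; lin_ext => -[i j] /=; rewrite tmapU coef_tensU /coef lextU linZ.
Qed.

End Rows.
#[export] Hint Resolve islin_coef islin_trow islin_tcol : linear.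

(** * Subspaces, tensors with a subspace, and bases *)

Section Subspaces.
Variable K : fieldType.
Local Notation V I := (FV K I).
Implicit Types I J L : choiceType.

Definition subspace {I} (D : V I -> Prop) :=
  D 0 /\ forall (a : K) x y, D x -> D y -> D (a *: x + y).

Section Closure.
Variables (I : choiceType) (D : V I -> Prop).
Hypothesis subD : subspace D.

Lemma subspace0 : D 0. Proof. by case: subD. Qed.
Lemma subspaceD x y : D x -> D y -> D (x + y).
Proof. by move=> Dx Dy; rewrite -[x]scale1r; apply: subD.2. Qed.
Lemma subspaceZ a x : D x -> D (a *: x).
Proof. by move=> Dx; rewrite -[_ *: _]addr0; apply: subD.2 => //; apply: subspace0. Qed.
Lemma subspace_sum (T : Type) (s : seq T) (P : pred T) (F : T -> V I) :
  (forall t, P t -> D (F t)) -> D (\sum_(t <- s | P t) F t).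
Proof.
move=> DF; elim: s => [|x s IH]; first by rewrite big_nil; apply: subspace0.
by rewrite big_cons; case: ifP => // Px; apply: subspaceD => //; apply: DF.
Qed.
Lemma subspace_lext L (f : L -> V I) x : (forall p, D (f p)) -> D (lext f x).
Proof. by move=> Df; apply: subspace_sum => t _; apply: subspaceZ. Qed.
End Closure.

Section InTens.
Variables (J : choiceType) (D : V J -> Prop).
Hypothesis subD : subspace D.

Lemma in_tensP I (z : V (I * J)%type) : in_tens D z <-> forall i, D (trow i z).
Proof.
split=> [[s [sD ->]] i | rowD].
  rewrite (lin_sum (islin_trow _)) big_seq; apply: subspace_sum => // p ps.
  by rewrite trow_tens; apply: subspaceZ => //; apply: sD.
exists [seq (<< i >>, trow i z) | i <- fsts z]; split.
  by move=> p /mapP [i _ ->]; apply: rowD.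
by rewrite big_map; apply: tens_trowsE; apply: fstsP.
Qed.

Lemma in_tens_lext I L (f : L -> V (I * J)%type) x :
  (forall p, in_tens D (f p)) -> in_tens D (lext f x).
Proof.
move=> fD; apply/in_tensP => i; rewrite (lin_lext (islin_trow _)).
by apply: subspace_lext => // p; move/in_tensP: (fD p).
Qed.

Lemma in_tens_tmap I I' (g : V I -> V I') (z : V (I * J)%type) :
  islin g -> in_tens D z -> in_tens D (tmap g id z).
Proof.
move=> linG /in_tensP zD; apply/in_tensP => k; rewrite tmap_trows // (lin_sum (islin_trow _)).
by apply: subspace_sum => // i _; rewrite trow_tens; apply: subspaceZ.
Qed.

Lemma in_tens_tmap_r I (g : V J -> V J) (z : V (I * J)%type) :
  islin g -> (forall c, D c -> D (g c)) -> in_tens D z -> in_tens D (tmap id g z).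
Proof.
move=> linG gD /in_tensP zD; apply/in_tensP => k.
by rewrite trow_tmap_id //; apply: gD.
Qed.

Lemma contr_l_in_tens I (e : V I -> K) (z : V (I * J)%type) :
  islinK e -> in_tens D z -> D (contr_l e z).
Proof.
move=> linE [s [sD ->]]; rewrite (lin_sum (islin_contr_l _)) big_seq.
by apply: subspace_sum => // p ps; rewrite contr_l_tens //; apply: subspaceZ => //; apply: sD.
Qed.

End InTens.

Lemma tmap_lift I I' J (iota : V I -> V I') (s : seq (V I' * V J)) :
  islin iota -> (forall p, p \in s -> exists x, iota x = p.1) ->
  exists z, tmap iota id z = \sum_(p <- s) tens p.1 p.2.
Proof.
move=> linI; elim: s => [|p s IH] sI.
  by exists 0; rewrite big_nil (lin0 (islin_tmap _ _)).
have [z ez] : exists z, tmap iota id z = \sum_(q <- s) tens q.1 q.2.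
  by apply: IH => q qs; apply: sI; rewrite inE qs orbT.
have [x ex] := sI p (mem_head p s).
exists (tens x p.2 + z).
by rewrite big_cons (linD (islin_tmap _ _)) ez (tmap_tens _ _ linI (@islin_id _ _)) ex.
Qed.

End Subspaces.

Section Bases.
Variable K : fieldType.
Local Notation V I := (FV K I).
Implicit Types I J L : choiceType.

Definition lin_indep {I} (S : V I -> Prop) :=
  forall (s : seq (V I)) (a : V I -> K), uniq s -> (forall v, v \in s -> S v) ->
    \sum_(v <- s) a v *: v = 0 -> forall v, v \in s -> a v = 0.
Definition lin_span {I} (S : V I -> Prop) (w : V I) :=
  exists (s : seq (V I)) (a : V I -> K),
    (forall v, v \in s -> S v) /\ w = \sum_(v <- s) a v *: v.

Lemma lin_span_subspace I (W S : V I -> Prop) w :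
  subspace W -> (forall v, S v -> W v) -> lin_span S w -> W w.
Proof.
move=> subW SW [s [a [sS ->]]]; rewrite big_seq.
by apply: subspace_sum => // v vs; apply: subspaceZ => //; apply/SW/sS.
Qed.

Lemma lin_indep_add I (S : V I -> Prop) w :
  lin_indep S -> ~ lin_span S w -> lin_indep (fun v => S v \/ v = w).
Proof.
move=> indS Nw s a us sSw e.
have remS v : v \in rem w s -> S v.
  move=> vr; case: (sSw v (mem_rem vr)) => // vw.
  by move: vr; rewrite vw mem_rem_uniqF.
case: (boolP (w \in s)) => ws; last first.
  by apply: indS => // v vs; case: (sSw v vs) => // vw; move: ws; rewrite -vw vs.
rewrite (perm_big _ (perm_to_rem ws)) big_cons /= in e.
have aw : a w = 0.
  apply: contrapT => /eqP naw; apply: Nw.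
  exists (rem w s), (fun v => - (a w)^-1 * a v); split => //.
  have e' : a w *: w = - \sum_(v <- rem w s) a v *: v by apply/eqP; rewrite -addr_eq0 e.
  transitivity ((a w)^-1 *: (a w *: w)); first by rewrite scalerA mulVf // scale1r.
  rewrite e' scalerN scaler_sumr -sumrN; apply: eq_bigr => v _.
  by rewrite scalerA mulNr scaleNr.
rewrite aw scale0r add0r in e.
move=> v vs; case: (eqVneq v w) => [->//|vw]; apply: (indS _ _ (rem_uniq w us) remS e).
by rewrite mem_rem_uniq // inE vw vs.
Qed.

Lemma chain_bound_seq (T : eqType) (S0 : T -> Prop) (F : (T -> Prop) -> Prop) (s : seq T) :
  classical_sets.total_on F classical_sets.subset ->
  (forall v, v \in s -> S0 v \/ exists2 A, F A & A v) ->
  (forall v, v \in s -> S0 v) \/ (exists A, F A /\ forall v, v \in s -> S0 v \/ A v).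
Proof.
move=> Ftot; elim: s => [|x s IH] sF; first by left.
have [allS0|[A [FA sA]]] : (forall v, v \in s -> S0 v) \/
    (exists A, F A /\ forall v, v \in s -> S0 v \/ A v).
- by apply: IH => v vs; apply: sF; rewrite inE vs orbT.
- case: (sF x (mem_head x s)) => [S0x|[B FB Bx]].
    by left => v; rewrite inE => /orP[/eqP ->|/allS0].
  right; exists B; split => // v; rewrite inE => /orP[/eqP ->|/allS0]; by [right|left].
- right; case: (sF x (mem_head x s)) => [S0x|[B FB Bx]].
    by exists A; split => // v; rewrite inE => /orP[/eqP ->|/sA]; [left|].
  case: (Ftot A B FA FB) => AB; [exists B | exists A]; split => // v;
    rewrite inE => /orP[/eqP ->|/sA[]]; by [right|left|right; apply: AB|right].
Qed.

Lemma basis_extension I (W S0 : V I -> Prop) :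
  subspace W -> (forall v, S0 v -> W v) -> lin_indep S0 ->
  exists S, [/\ (forall v, S0 v -> S v), (forall v, S v -> W v), lin_indep S &
                 (forall w, W w -> lin_span S w)].
Proof.
move=> subW S0W indS0.
pose P A := (forall v, A v -> W v) /\ lin_indep (fun v => S0 v \/ A v).
have [A [[AW indA] Amax]] : exists A, P A /\ forall B, classical_sets.proper A B -> ~ P B.
  apply: classical_sets.Zorn_bigcup => F FP Ftot; split.
    by move=> v [A FA Av]; exact: (FP A FA).1 v Av.
  move=> s a us sF; case: (chain_bound_seq Ftot sF) => [sS0|[A [FA sA]]].
    exact: indS0.
  exact: (FP A FA).2.
exists (fun v => S0 v \/ A v); split => [v|v [/S0W|/AW] //|//|w Ww].
  by left.
apply: contrapT => Nw; apply: (Amax (fun v => A v \/ v = w)).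
- split=> [v Av|]; first by left.
  move=> /(_ w (or_intror erefl)) Aw; apply: Nw.
  exists [:: w], (fun _ => 1); split; last by rewrite big_seq1 scale1r.
  by move=> v; rewrite inE => /eqP ->; right.
- split=> [v [/AW|->]|] //.
  move=> s a us sS; apply: (lin_indep_add indA Nw) => // v /sS; tauto.
Qed.

Section BasisType.
Variables (I : choiceType) (S : V I -> Prop).

Definition basis_type : choiceType := {v : V I | `[< S v >]}.
Definition basis_map : V basis_type -> V I := lext val.

Lemma basis_map_inj : lin_indep S -> injective basis_map.
Proof.
move=> indS x y e; apply/eqP; rewrite -subr_eq0; apply/eqP; set z := x - y.
have z0 : basis_map z = 0.
  have linB : islin basis_map := lext_lin _.
  by rewrite /z -scaleN1r addrC linB e scaleN1r addrC subrr.
pose c v : K := if insub v is Some t then z@_t else 0.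
have supp_uniq : uniq (map val (msupp z)) by rewrite map_inj_uniq ?fset_uniq //; apply: val_inj.
have suppS v : v \in map val (msupp z) -> S v.
  by case/mapP => t _ ->; move: (valP t) => /asboolP.
have {}z0 : \sum_(v <- map val (msupp z)) c v *: v = 0.
  by rewrite -[RHS]z0 /basis_map /lext big_map; apply: eq_bigr => t _; rewrite /c valK.
apply/malgP => k; rewrite mcoeff0.
case: (boolP (k \in msupp z)) => kz; last exact: mcoeff_outdom.
have := indS _ _ supp_uniq suppS z0 (val k).
by rewrite /c valK => -> //; apply: map_f.
Qed.

Lemma basis_map_span (x : V basis_type) : lin_span S (basis_map x).
Proof.
exists (map val (msupp x)), (fun v => if insub v is Some t then x@_t else 0); split.
  by move=> v /mapP [t _ ->]; move: (valP t) => /asboolP.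
by rewrite big_map; apply: eq_bigr => t _; rewrite valK.
Qed.

Lemma basis_map_onto w : lin_span S w -> exists x, basis_map x = w.
Proof.
move=> [s [a [sS ->]]].
exists (\sum_(v <- s) a v *: (if insub v is Some t then << t >> else 0)).
rewrite /basis_map (lin_sum (lext_lin _)) big_seq [RHS]big_seq; apply: eq_bigr => v vs.
rewrite (linZ (lext_lin _)); congr (_ *: _).
case: insubP => [t _ <-|]; first by rewrite lextU.
by move/asboolP; case; apply: sS.
Qed.
End BasisType.

Lemma subspace_param I (W : V I -> Prop) : subspace W ->
  exists (T : choiceType) (iota : V T -> V I),
    [/\ islin iota, injective iota, (forall x, W (iota x)) &
        (forall w, W w -> exists x, iota x = w)].
Proof.
move=> subW.
have [S [_ SW indS spanS]] := @basis_extension I W (fun _ => False) subW (fun _ => False_ind _)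
   (fun s a _ sF _ v vs => False_ind _ (sF v vs)).
exists (basis_type S), (@basis_map I S); split.
- exact: lext_lin.
- exact: basis_map_inj.
- by move=> x; apply: (lin_span_subspace subW SW); apply: basis_map_span.
- by move=> w /spanS; apply: basis_map_onto.
Qed.

Lemma lin_factor I I' L (iota : V I -> V I') (F : V L -> V I') :
  islin iota -> injective iota -> islin F -> (forall x, exists y, iota y = F x) ->
  exists G : V L -> V I, islin G /\ forall x, iota (G x) = F x.
Proof.
move=> linI injI linF FI; exists (fun x => projT1 (cid (FI x))).
split=> [a u v|x]; last by case: cid.
by apply: injI; rewrite linI; do !case: cid => ? ->; rewrite linF.
Qed.

Lemma lin_right_inverse I I' (f : V I -> V I') : islin f -> (forall y, exists x, f x = y) ->
  exists g : V I' -> V I, islin g /\ forall y, f (g y) = y.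
Proof.
move=> linF ontoF; exists (lext (fun j => projT1 (cid (ontoF << j >>)))).
split; first exact: lext_lin.
by lin_ext => j /=; rewrite lextU; case: cid.
Qed.

Lemma lin_indep_image_basis I I' (f : V I -> V I') : islin f -> injective f ->
  lin_indep (fun v => exists i, v = f << i >>).
Proof.
move=> linF injF s a us sF e.
have [t st] : exists t : seq I, s = map (fun i => f << i >>) t.
  elim: s sF {us e} => [|x s IH] sF; first by exists [::].
  have [t ->] := IH (fun v vs => sF v ltac:(by rewrite inE vs orbT)).
  by have [i ->] := sF x (mem_head x s); exists (i :: t).
rewrite {}st big_map in us e |- *; have ut := map_uniq us.
have {}e : \sum_(i <- t) a (f << i >>) *: << i >> = 0.
  by apply: injF; rewrite (lin_sum linF) (lin0 linF) -[RHS]e; apply: eq_bigr => i _; rewrite linZ.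
move=> v /mapP [k kt ->]; move/(congr1 (mcoeff k)): e.
rewrite mcoeff0 raddf_sum (bigD1_seq k kt ut) /= mcoeffZ mcoeffU eqxx mulr1 big1 ?addr0 // => i ik.
by rewrite mcoeffZ mcoeffU (negbTE ik) mulr0.
Qed.

Lemma lin_left_inverse I I' (f : V I -> V I') : islin f -> injective f ->
  exists g : V I' -> V I, islin g /\ forall x, g (f x) = x.
Proof.
move=> linF injF.
have [S [imS _ indS spanS]] :=
  @basis_extension I' (fun _ => True) (fun v => exists i, v = f << i >>)
   (conj Logic.I (fun _ _ _ _ _ => Logic.I)) (fun _ _ => Logic.I) (lin_indep_image_basis linF injF).
have [coord [linC coordK]] : exists coord : V I' -> V (basis_type S),
    islin coord /\ forall w, basis_map (coord w) = w.
  apply: lin_factor; [exact: lext_lin | exact: basis_map_inj | exact: islin_id |].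
  by move=> w; apply: basis_map_onto; apply: spanS.
pose h (t : basis_type S) : V I := if pselect (exists i, val t = f << i >>) is left e
  then << projT1 (cid e) >> else 0.
exists (fun w => lext h (coord w)); split; first by linearity.
move=> x; move: x; lin_ext => i /=.
have Si : `[< S (f << i >>) >] by apply/asboolP; apply: imS; exists i.
have -> : coord (f << i >>) = << Sub (f << i >>) Si >>.
  by apply: (basis_map_inj indS); rewrite coordK /basis_map lextU.
rewrite lextU /h; case: pselect => [e|[]]; last by exists i.
by case: cid => j /= /injF ->.
Qed.

Lemma in_tens_tmap_inj I I' J (D : V J -> Prop) (f : V I -> V I') (z : V (I * J)%type) :
  subspace D -> islin f -> injective f -> in_tens D (tmap f id z) -> in_tens D z.
Proof.
move=> subD linF injF fzD; have [g [linG gK]] := lin_left_inverse linF injF.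
have -> : z = tmap g id (tmap f id z).
  by rewrite tmap_comp; try linearity; rewrite -[LHS]tmap_id; apply: eq_tmap.
exact: in_tens_tmap.
Qed.

Lemma image_subspace I I' (f : V I -> V I') : islin f -> subspace (fun w => exists x, f x = w).
Proof.
move=> linF; split; first by exists 0; rewrite lin0.
by move=> a _ _ [x <-] [y <-]; exists (a *: x + y); rewrite linF.
Qed.

End Bases.

(** * Comodules *)

Section Comodules.
Variable K : fieldType.
Local Notation V I := (FV K I).
Local Notation coact M := (@crho K _ M).
Implicit Types I L : choiceType.

Variables (J : choiceType) (dC : V J -> V (J * J)%type) (eC : V J -> K).
Hypothesis HC : is_coalgebra dC eC.

Lemma coalg_lin : islin dC. Proof. by case: HC. Qed.
Lemma coalg_linK : islinK eC. Proof. by case: HC. Qed.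
Local Hint Resolve coalg_lin coalg_linK : linear.

Lemma regular_comodule : is_comodule dC eC dC.
Proof. by case: HC. Qed.

Definition coassoc_defect I (rho : V I -> V (I * J)%type) x :=
  assocr (tmap rho id (rho x)) - tmap id dC (rho x).
Definition counit_defect I (rho : V I -> V (I * J)%type) x := contr_r eC (rho x) - x.

Lemma is_comoduleP I (rho : V I -> V (I * J)%type) :
  is_comodule dC eC rho <->
  [/\ islin rho, forall x, coassoc_defect rho x = 0 & forall x, counit_defect rho x = 0].
Proof.
rewrite /coassoc_defect /counit_defect.
split=> -[linR co cu]; split=> // x; first by rewrite co subrr.
- by rewrite cu subrr.
- by apply/eqP; rewrite -subr_eq0 co.
- by apply/eqP; rewrite -subr_eq0 cu.
Qed.

Lemma islin_coassoc_defect I (rho : V I -> V (I * J)%type) :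
  islin rho -> islin (coassoc_defect rho).
Proof. by move=> linR; rewrite /coassoc_defect; linearity. Qed.
Lemma islin_counit_defect I (rho : V I -> V (I * J)%type) :
  islin rho -> islin (counit_defect rho).
Proof. by move=> linR; rewrite /counit_defect; linearity. Qed.
Local Hint Resolve islin_coassoc_defect islin_counit_defect : linear.

Section Morphism.
Variables (I I' : choiceType) (rho : V I -> V (I * J)%type) (rho' : V I' -> V (I' * J)%type).
Variable f : V I' -> V I.
Hypotheses (linR : islin rho) (linR' : islin rho') (linF : islin f).
Hypothesis morF : forall x, rho (f x) = tmap f id (rho' x).

Lemma coassoc_defect_mor y : coassoc_defect rho (f y) = tmap f id (coassoc_defect rho' y).
Proof.
rewrite /coassoc_defect linB; last by linearity.
have -> : tmap rho id (rho (f y)) = tmap (tmap f id) id (tmap rho' id (rho' y)).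
  rewrite morF !tmap_comp; try linearity.
  by apply: eq_tmap => // i; rewrite morF.
rewrite assocr_tmap; try linearity.
rewrite (@eq_tmap _ _ _ _ _ f f (tmap id id) id) => [|//|j]; last by rewrite tmap_id.
by rewrite morF !tmap_comp; try linearity.
Qed.

Lemma counit_defect_mor y : counit_defect rho (f y) = f (counit_defect rho' y).
Proof.
rewrite /counit_defect linB // morF contr_r_tmap //; exact: coalg_linK.
Qed.
End Morphism.

Lemma comodule_cover I (rho : V I -> V (I * J)%type) : islin rho ->
  (forall k : I, exists (I' : choiceType) (rho' : V I' -> V (I' * J)%type) (f : V I' -> V I) y,
     [/\ is_comodule dC eC rho', islin f, (forall x, rho (f x) = tmap f id (rho' x))
       & f y = << k >>]) ->
  is_comodule dC eC rho.
Proof.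
move=> linR cover; apply/is_comoduleP; split=> //; lin_ext => k /=;
  have [I' [rho' [f [y [/is_comoduleP[linR' co cu] linF morF <-]]]]] := cover k.
- by rewrite (coassoc_defect_mor linR linR' linF morF) co (lin0 (islin_tmap _ _)).
- by rewrite (counit_defect_mor linF morF) cu (lin0 linF).
Qed.

Lemma comodule_sub I I' (rho : V I -> V (I * J)%type) (rho' : V I' -> V (I' * J)%type)
    (iota : V I -> V I') :
  is_comodule dC eC rho' -> islin iota -> injective iota ->
  (forall x, rho' (iota x) = tmap iota id (rho x)) -> is_comodule dC eC rho.
Proof.
move=> /is_comoduleP[linR' co cu] linI injI morI.
have linR : islin rho.
  move=> a u v; apply: (tmap_inj (J := J) linI injI).
  by rewrite (islin_tmap _ _) -!morI linI linR'.
apply/is_comoduleP; split=> // x.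
- apply: (tmap_inj (J := (J * J)%type) linI injI).
  by rewrite -(coassoc_defect_mor linR' linR linI morI) co (lin0 (islin_tmap _ _)).
- by apply: injI; rewrite -(counit_defect_mor linI morI) cu (lin0 linI).
Qed.

Section Subcategory.
Variable D : V J -> Prop.
Hypothesis subD : subspace D.

Lemma comodD_sub (M N : comod K J) f : is_comod dC eC N -> @is_comod_mor K J N M f ->
  injective f -> comodD dC eC D M -> comodD dC eC D N.
Proof.
move=> HN [linF morF] injF [_ MD]; split=> // x.
by apply: (in_tens_tmap_inj subD linF injF); rewrite -morF.
Qed.

Lemma comodD_quot (M N : comod K J) f : is_comod dC eC N -> @is_comod_mor K J M N f ->
  (forall y, exists x, f x = y) -> comodD dC eC D M -> comodD dC eC D N.
Proof.
move=> HN [linF morF] ontoF [_ MD]; split=> // y.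
have [g [_ gK]] := lin_right_inverse linF ontoF.
by rewrite -[y]gK morF; apply: in_tens_tmap.
Qed.
End Subcategory.

Section DirectSum.
Variables (T : choiceType) (F : T -> comod K J).

Definition dsum_inj (i : T) : V (cI (F i)) -> V (cI (dsum F)) :=
  lext (fun x : cI (F i) => << @Tagged T i (fun i => cI (F i)) x >>).
Arguments dsum_inj i _ : clear implicits.

Lemma islin_dsum_inj i : islin (dsum_inj i). Proof. exact: lext_lin. Qed.
Lemma islin_dsum : islin (coact (dsum F)). Proof. exact: lext_lin. Qed.
Local Hint Resolve islin_dsum_inj islin_dsum : linear.

Lemma dsum_inj_mor i x : islin (coact (F i)) ->
  coact (dsum F) (dsum_inj i x) = tmap (dsum_inj i) id (coact (F i) x).
Proof. by move=> linFi; move: x; lin_ext => t; rewrite /dsum_inj lextU /= lextU. Qed.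

Lemma dsum_comodule : (forall i, is_comod dC eC (F i)) -> is_comod dC eC (dsum F).
Proof.
move=> HF; apply: comodule_cover; first exact: islin_dsum.
case=> i t; exists (cI (F i)), (coact (F i)), (dsum_inj i), << t >>; split.
- exact: HF.
- exact: islin_dsum_inj.
- by move=> x; apply: dsum_inj_mor; case: (HF i).
- by rewrite /dsum_inj lextU.
Qed.

Lemma comodD_dsum D : subspace D ->
  (forall i, comodD dC eC D (F i)) -> comodD dC eC D (dsum F).
Proof.
move=> subD FD; split; first by apply: dsum_comodule => i; case: (FD i).
move=> x; apply: in_tens_lext => // -[i t].
by apply: in_tens_tmap => //; [exact: islin_dsum_inj | case: (FD i)].
Qed.
End DirectSum.

End Comodules.
Arguments dsum_inj {K J T} F i _.
Arguments islin_dsum {K J T} F.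
#[export] Hint Resolve islin_dsum islin_dsum_inj : linear.
#[export] Hint Resolve coalg_lin coalg_linK : linear.

(** * Module coalgebras and the comodules [X (x) M] *)

Section ModuleCoalgebra.
Variable K : fieldType.
Local Notation V I := (FV K I).
Local Notation coact M := (@crho K _ M).
Implicit Types I L : choiceType.

Variables (B J : choiceType) (dH : V B -> V (B * B)%type) (eH : V B -> K)
  (dC : V J -> V (J * J)%type) (eC : V J -> K) (act : V B -> V J -> V J).
Hypotheses (HC : is_coalgebra dC eC) (bilA : isbilin act).
Hypothesis act_comul : forall h c, dC (act h c) = tbil act (dH h) (dC c).
Hypothesis act_counit : forall h c, eC (act h c) = eH h * eC c.

Lemma islin_act_l c : islin (fun h => act h c).
Proof. by move=> a u v; apply: bilA.1. Qed.
Lemma islin_act_r h : islin (act h).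
Proof. by move=> a u v; apply: bilA.2. Qed.
Local Hint Resolve islin_act_l islin_act_r : linear.

(* [act_pair phi (x (x) h) (m (x) c) = phi x m (x) h c]; for [phi = tens] this is the
   coaction of [X (x) M] applied to [rho_X x (x) rho_M m]. *)
Definition act_pair I1 I2 L (phi : V I1 -> V I2 -> V L)
    (u : V (I1 * B)%type) (v : V (I2 * J)%type) : V (L * J)%type :=
  lext (fun a => tmap (phi << a.1 >>) (act << a.2 >>) v) u.
Local Hint Unfold act_pair : linear.

Lemma act_pairU I1 I2 L (phi : V I1 -> V I2 -> V L) a b :
  act_pair phi << a >> << b >> = tens (phi << a.1 >> << b.1 >>) (act << a.2 >> << b.2 >>).
Proof. by case: b => b1 b2; rewrite /act_pair lextU tmapU. Qed.

Lemma act_pair_tens I1 I2 L (phi : V I1 -> V I2 -> V L) p h q c :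
  (forall q, islin (fun p => phi p q)) -> (forall p, islin (phi p)) ->
  act_pair phi (tens p << h >>) (tens q << c >>) = tens (phi p q) (act << h >> << c >>).
Proof.
move=> linl linr; move: p; lin_ext => a /=; move: q; lin_ext => b /=.
by rewrite !tensU act_pairU.
Qed.

Lemma in_tens_act_pair I1 I2 L (phi : V I1 -> V I2 -> V L) (D : V J -> Prop) u v :
  subspace D -> (forall h c, D c -> D (act h c)) -> (forall p, islin (phi p)) ->
  in_tens D v -> in_tens D (act_pair phi u v).
Proof.
move=> subD actD linr vD; apply: in_tens_lext => // a.
rewrite tmap_split; try linearity.
apply: (in_tens_tmap subD); first by linearity.
by apply: (in_tens_tmap_r subD) => //; [linearity | apply: actD].
Qed.

Lemma contr_r_act_pair I1 I2 (u : V (I1 * B)%type) (v : V (I2 * J)%type) :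
  contr_r eC (act_pair (@tens K _ _) u v) = tens (contr_r eH u) (contr_r eC v).
Proof.
move: u; lin_ext => a /=; move: v; lin_ext => b /=.
rewrite act_pairU contr_r_tens; last by linearity.
by rewrite act_counit /contr_r !lextU tensZl tensZr scalerA tensU mulrC.
Qed.

Lemma assocr_act_pair2 I1 I2 a1 b1 h c :
  assocr (act_pair (act_pair (@tens K _ _)) (assocl (tens << a1 >> h)) (assocl (tens << b1 >> c)))
  = tens << (a1, b1) >> (tbil act h c) :> V ((I1 * I2) * (J * J))%type.
Proof.
move: h; lin_ext => -[h1 h2] /=; move: c; lin_ext => -[c1 c2] /=.
rewrite !tensU /assocl !lextU /= act_pairU act_pairU /= assocr_tens.
by rewrite !tensU /tbil !lextU.
Qed.

Lemma act_pair_comul I1 I2 (u : V (I1 * B)%type) (v : V (I2 * J)%type) :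
  assocr (act_pair (act_pair (@tens K _ _)) (assocl (tmap id dH u)) (assocl (tmap id dC v)))
  = tmap id dC (act_pair (@tens K _ _) u v).
Proof.
move: u; lin_ext => -[a1 a2] /=; move: v; lin_ext => -[b1 b2] /=.
rewrite !tmapU assocr_act_pair2 act_pairU tmap_tens; try linearity.
by rewrite act_comul tensU.
Qed.

Section TensorComodule.
Variables (IX : choiceType) (rhoX : V IX -> V (IX * B)%type) (M : comod K J).
Local Notation ct := (ctens act rhoX M).

Lemma islin_ctens : islin (coact ct). Proof. exact: lext_lin. Qed.
Local Hint Resolve islin_ctens : linear.

Lemma ctens_coactU x m :
  coact ct << (x, m) >> = act_pair (@tens K _ _) (rhoX << x >>) (coact M << m >>).
Proof. by rewrite /= lextU; apply: eq_lext => a; apply: eq_lext => b; rewrite tensU. Qed.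

Lemma tmap_ctens_act_pair u v : islin rhoX -> islin (coact M) ->
  tmap (coact ct) id (act_pair (@tens K _ _) u v)
  = act_pair (act_pair (@tens K _ _)) (tmap rhoX id u) (tmap (coact M) id v).
Proof.
move=> linX linM; move: u; lin_ext => -[x h]; move: v; lin_ext => -[m c].
rewrite act_pairU tensU tmap_tens; try linearity.
by rewrite ctens_coactU !tmapU act_pair_tens // => ?; linearity.
Qed.

Lemma ctens_comodule : is_comodule dH eH rhoX -> is_comod dC eC M -> is_comod dC eC ct.
Proof.
move=> [linX coX cuX] [linM coM cuM]; split; first exact: islin_ctens.
- lin_ext => -[x m]; rewrite ctens_coactU tmap_ctens_act_pair //.
  by rewrite -[tmap rhoX _ _]assocrK coX -[tmap (coact M) _ _]assocrK coM act_pair_comul.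
- by lin_ext => -[x m]; rewrite ctens_coactU contr_r_act_pair cuX cuM tensU.
Qed.

Lemma ctens_in_tens D : subspace D -> (forall h c, D c -> D (act h c)) ->
  (forall x, in_tens D (coact M x)) -> forall w, in_tens D (coact ct w).
Proof.
move=> subD actD MD w; rewrite (lin_basis islin_ctens).
apply: in_tens_lext => // -[x m]; rewrite ctens_coactU.
by apply: (in_tens_act_pair _ subD actD _ (MD _)) => p; apply: islin_tens.
Qed.

End TensorComodule.

Lemma Hsubcoalg_subspace D : is_Hsubcoalg dC act D -> subspace D.
Proof. by case. Qed.

Lemma comodD_closed D :
  is_Hsubcoalg dC act D -> is_closed_Hmod dC eC dH eH act (comodD dC eC D).
Proof.
move=> HD; have subD := Hsubcoalg_subspace HD; have [_ _ _ actD] := HD.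
split=> [M [] // | M N f _ HN morF injF | M N f _ HN morF ontoF | T F FD | IX rhoX M HX [HM MD]].
- exact: comodD_sub morF injF.
- exact: comodD_quot morF ontoF.
- exact: comodD_dsum.
- by split; [apply: ctens_comodule | apply: ctens_in_tens].
Qed.

End ModuleCoalgebra.
#[export] Hint Resolve islin_act_l islin_act_r : linear.
#[export] Hint Unfold act_pair : linear.
#[export] Hint Resolve islin_ctens : linear.

(** * Recovering a subcoalgebra from its comodules *)

Section Injectivity.
Variable K : fieldType.
Local Notation V I := (FV K I).
Variables (J : choiceType) (dC : V J -> V (J * J)%type) (eC : V J -> K).
Hypothesis HC : is_coalgebra dC eC.

Lemma in_tens2_in_tens (D : V J -> Prop) z : in_tens2 D z -> in_tens D z.
Proof. by case=> s [sD ->]; exists s; split=> // p /sD[]. Qed.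

Lemma subcoalg_le_of_comodD (D1 D2 : V J -> Prop) :
  subspace D1 -> (forall c, D1 c -> in_tens2 D1 (dC c)) -> subspace D2 ->
  (forall M, comodD dC eC D1 M -> comodD dC eC D2 M) -> forall c, D1 c -> D2 c.
Proof.
move=> subD1 comulD1 subD2 le12 c D1c.
have [T [iota [linI injI iotaD1 ontoD1]]] := subspace_param subD1.
have [rho [linR rhoE]] : exists rho : V T -> V (T * J)%type,
    islin rho /\ forall y, tmap iota id (rho y) = dC (iota y).
  apply: lin_factor; [exact: islin_tmap | exact: tmap_inj linI injI | linearity |] => y.
  have [s [sD ->]] := comulD1 _ (iotaD1 y).
  by apply: tmap_lift => // p /sD[/ontoD1[x <-] _]; exists x.
have /le12[_ QD2] : comodD dC eC D1 (Comod rho).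
  split=> [|y].
    by apply: (comodule_sub HC (regular_comodule HC) linI injI) => y; rewrite rhoE.
  by apply: (in_tens_tmap_inj subD1 linI injI); rewrite rhoE; apply/in_tens2_in_tens/comulD1.
have [y <-] := ontoD1 c D1c.
have [_ _ _ counitC _] := HC.
rewrite -[iota y]counitC -rhoE contr_l_tmap; try linearity.
by apply: (contr_l_in_tens subD2); [linearity | exact: QD2].
Qed.

Lemma comodD_inj (B : choiceType) (act : V B -> V J -> V J) (D1 D2 : V J -> Prop) :
  is_Hsubcoalg dC act D1 -> is_Hsubcoalg dC act D2 ->
  comodD dC eC D1 = comodD dC eC D2 -> D1 = D2.
Proof.
move=> [D10 D1L comul1 _] [D20 D2L comul2 _] E.
apply: funext => c; apply: propext; split; apply: subcoalg_le_of_comodD => //.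
- by move=> M; rewrite E.
- by move=> M; rewrite E.
Qed.

End Injectivity.

(** * The coefficient space of a closed subcategory *)

Section CoefficientSpace.
Variable K : fieldType.
Local Notation V I := (FV K I).
Local Notation coact M := (@crho K _ M).
Implicit Types I L : choiceType.

Variables (B J : choiceType) (dH : V B -> V (B * B)%type) (eH : V B -> K)
  (dC : V J -> V (J * J)%type) (eC : V J -> K) (act : V B -> V J -> V J).
Hypotheses (coalgH : is_coalgebra dH eH) (HC : is_coalgebra dC eC) (bilA : isbilin act).

Variable P : comod K J -> Prop.
Hypothesis closedP : is_closed_Hmod dC eC dH eH act P.

Lemma closed_comod M : P M -> is_comod dC eC M.
Proof. by case: closedP => HP _ _ _ _; apply: HP. Qed.

(* The matrix coefficients [(phi (x) id) rho_N(n)] of the objects [N] of [P]; they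
   already form a subspace, since [P] has direct sums. *)
Definition coef_space (c : V J) := exists (N : comod K J) (phi : cI N -> K) (n : V (cI N)),
  P N /\ c = coef phi (coact N n).

Lemma coef_spaceW c : coef_space c ->
  {N : comod K J & {phi : cI N -> K & {n : V (cI N) | P N /\ c = coef phi (coact N n)}}}.
Proof.
move=> cP; have [N NP] := cid cP; have [phi phiP] := cid NP; have [n nP] := cid phiP.
by exists N, phi, n.
Qed.

Lemma coef_space_row M x i : P M -> coef_space (trow i (coact M x)).
Proof. by exists M, (fun k => (k == i)%:R), x. Qed.

Lemma coef_tmap_dsum_inj (T : choiceType) (F : T -> comod K J) i (phi : cI (dsum F) -> K)
    (phii : cI (F i) -> K) (z : V (cI (F i) * J)%type) :
  (forall t, phi (Tagged (fun i => cI (F i)) t) = phii t) ->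
  coef phi (tmap (dsum_inj F i) id z) = coef phii z.
Proof.
move=> phiE; move: z; lin_ext => -[t j] /=.
by rewrite tmapU /dsum_inj lextU coef_tensU phiE /coef lextU.
Qed.

Lemma coef_space_subspace : subspace coef_space.
Proof.
have [_ _ _ dsumP _] := closedP; split.
  pose E (v : void) : comod K J := match v with end.
  exists (dsum E), (fun _ => 0), 0; split; first by apply: dsumP; case.
  by rewrite (lin0 (islin_dsum E)) (lin0 (islin_coef _)).
move=> a _ _ [N1 [phi1 [n1 [P1 ->]]]] [N2 [phi2 [n2 [P2 ->]]]].
pose F (b : bool) := if b then N1 else N2.
pose phi (p : cI (dsum F)) : K :=
  (if tag p as b return cI (F b) -> K then phi1 else phi2) (tagged p).
exists (dsum F), phi, (a *: dsum_inj F true n1 + dsum_inj F false n2).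
split; first by apply: dsumP; case.
have [lin1 _ _] := closed_comod P1; have [lin2 _ _] := closed_comod P2.
rewrite (islin_dsum F) (islin_coef phi) !dsum_inj_mor //.
by rewrite (coef_tmap_dsum_inj (F := F) (i := true) (phii := phi1)) //
  (coef_tmap_dsum_inj (F := F) (i := false) (phii := phi2)).
Qed.

Lemma coef_coact (N : comod K J) (phi : cI N -> K) n : is_comod dC eC N ->
  dC (coef phi (coact N n)) = tmap (fun w => coef phi (coact N w)) id (coact N n).
Proof.
case=> linN coN _; rewrite -coef_tmap_id; last by linearity.
by rewrite -coN coef_assocr tmap_comp; try linearity.
Qed.

Lemma coef_space_comul c : coef_space c -> in_tens2 coef_space (dC c).
Proof.
move=> [N [phi [n [PN ->]]]]; have [linN _ _] := closed_comod PN.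
rewrite coef_coact; last exact: closed_comod.
rewrite tmap_trows; last by linearity.
exists [seq (coef phi (coact N << i >>), trow i (coact N n)) | i <- fsts (coact N n)].
split; last by rewrite big_map.
by move=> p /mapP [i _ ->]; split; [exists N, phi, << i >> | apply: coef_space_row].
Qed.

Lemma coef_act_pair I (phi : I -> K) (u : V (B * B)%type) (v : V (I * J)%type) :
  coef (fun p : B * I => eH << p.1 >> * phi p.2) (act_pair act (@tens K _ _) u v)
  = act (contr_l eH u) (coef phi v).
Proof.
move: u; lin_ext => -[b h] /=; move: v; lin_ext => -[t j] /=.
rewrite act_pairU /= tensU coef_tensU /contr_l /coef !lextU /=.
by rewrite (linZ (islin_act_l bilA _)) (linZ (islin_act_r bilA _)) scalerA mulrC.
Qed.

Lemma coef_space_act h c : coef_space c -> coef_space (act h c).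
Proof.
move=> [N [phi [n [PN ->]]]]; have [linN _ _] := closed_comod PN.
have [_ _ _ _ ctensP] := closedP.
exists (ctens act dH N), (fun p => eH << p.1 >> * phi p.2), (tens h n); split.
  by apply: ctensP => //; apply: regular_comodule.
have -> : coact (ctens act dH N) (tens h n) = act_pair act (@tens K _ _) (dH h) (coact N n).
  move: h; lin_ext => b; move: n {PN}; lin_ext => t.
  by rewrite tensU ctens_coactU.
by rewrite coef_act_pair; have [_ _ _ -> _] := coalgH.
Qed.

Lemma coef_space_Hsubcoalg : is_Hsubcoalg dC act coef_space.
Proof.
have [sub0 subL] := coef_space_subspace.
by split=> //; [exact: coef_space_comul | move=> h c; exact: coef_space_act].
Qed.

Definition cofree I (w : V (I * J)%type) : V ((I * J) * J)%type := assocl (tmap id dC w).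
Lemma islin_cofree I : islin (@cofree I).
Proof. by rewrite /cofree; linearity. Qed.
Local Hint Resolve islin_cofree : linear.

Lemma closed_image (S : comod K J) L (tau : V L -> V (L * J)%type) (g : V (cI S) -> V L) :
  P S -> islin tau -> islin g -> (forall s, tau (g s) = tmap g id (coact S s)) ->
  exists (Q : comod K J) (iota : V (cI Q) -> V L),
    [/\ P Q, islin iota, injective iota, (forall y, tmap iota id (coact Q y) = tau (iota y)) &
        (forall s, exists y, iota y = g s)].
Proof.
move=> PS linT linG morG; have HS := closed_comod PS.
have [T [iota [linI injI imI ontoI]]] := subspace_param (image_subspace linG).
have [g' [linG' g'E]] : exists g', islin g' /\ forall s, iota (g' s) = g s.
  by apply: lin_factor => // s; apply: ontoI; exists s.
have [rho [linR rhoE]] : exists rho, islin rho /\ forall y, tmap iota id (rho y) = tau (iota y).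
  apply: lin_factor; [exact: islin_tmap | exact: tmap_inj linI injI | linearity |] => y.
  have [s <-] := imI y; rewrite morG tmap_trows //.
  rewrite -(big_map (fun j => (g << j >>, trow j (coact S s))) xpredT (fun p => tens p.1 p.2)).
  by apply: tmap_lift => // p /mapP [j _ ->]; apply: ontoI; exists << j >>.
have morG' s : rho (g' s) = tmap g' id (coact S s).
  apply: (@tmap_inj _ _ J _ iota linI injI); rewrite rhoE g'E morG tmap_comp; try linearity.
  by apply: eq_tmap => // i; rewrite g'E.
have ontoG' y : exists s, g' s = y by have [s gs] := imI y; exists s; apply: injI; rewrite g'E.
have HQ : is_comod dC eC (Comod rho).
  apply: (comodule_cover HC linR) => k; have [s gs] := ontoG' << k >>.
  by exists (cI S), (coact S), g', s; split.
have [_ _ quotP _ _] := closedP.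
exists (Comod rho), iota; split=> // [|s]; last by exists (g' s).
by apply: (quotP S (Comod rho) g' HS HQ _ ontoG' PS); split.
Qed.

Lemma closed_sub_cofree (M Q : comod K J) (iota : V (cI Q) -> V (cI M * J)%type) :
  is_comod dC eC M -> P Q -> islin iota -> injective iota ->
  (forall y, tmap iota id (coact Q y) = cofree (iota y)) ->
  (forall x, exists y, iota y = coact M x) -> P M.
Proof.
move=> HM PQ linI injI morI ontoI; have [linM coM cuM] := HM.
have [r [linR rE]] := lin_factor linI injI linM ontoI.
have injR : injective r by move=> x x' e; rewrite -[x]cuM -[x']cuM -!rE e.
have morR x : coact Q (r x) = tmap r id (coact M x).
  apply: (@tmap_inj _ _ J _ iota linI injI); rewrite morI rE /cofree -coM assocrK.
  by rewrite tmap_comp; try linearity; apply: eq_tmap => // i; rewrite rE.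
have [_ subP _ _ _] := closedP.
by apply: (subP Q M r (closed_comod PQ) HM _ injR PQ); split.
Qed.

Lemma coef_space_cover (M : comod K J) : is_comod dC eC M ->
  (forall x, in_tens coef_space (coact M x)) ->
  exists (S : comod K J) (g : V (cI S) -> V (cI M * J)%type),
    [/\ P S, islin g, (forall s, cofree (g s) = tmap g id (coact S s)) &
        (forall x, exists s, g s = coact M x)].
Proof.
move=> [linM _ _] MD.
have rowP (p : cI M * cI M) : coef_space (trow p.1 (coact M << p.2 >>)).
  by move/(in_tensP coef_space_subspace): (MD << p.2 >>).
pose w p := coef_spaceW (rowP p).
pose F p := projT1 (w p).
pose phi p : cI (F p) -> K := projT1 (projT2 (w p)).
pose n p : V (cI (F p)) := proj1_sig (projT2 (projT2 (w p))).
have wP p : P (F p) /\ trow p.1 (coact M << p.2 >>) = coef (phi p) (coact (F p) (n p)).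
  exact: (proj2_sig (projT2 (projT2 (w p)))).
have linF p : islin (coact (F p)) by case: (closed_comod (wP p).1).
pose g := lext (fun q : cI (dsum F) =>
  tens << (tag q).1 >> (coef (phi (tag q)) (coact (F (tag q)) << tagged q >>))).
have linG : islin g by exact: lext_lin.
have gE p y : g (dsum_inj F p y) = tens << p.1 >> (coef (phi p) (coact (F p) y)).
  by move: y; lin_ext => t; rewrite /dsum_inj /g !lextU.
have [_ _ _ dsumP _] := closedP.
exists (dsum F), g; split=> [||s|x].
- by apply: dsumP => p; case: (wP p).
- exact: linG.
- move: s; lin_ext => -[p t].
  have -> : << Tagged (fun p => cI (F p)) t >> = dsum_inj F p << t >> by rewrite /dsum_inj lextU.
  rewrite gE dsum_inj_mor // /cofree tmap_tens; try linearity.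
  rewrite coef_coact; last exact: closed_comod (wP p).1.
  rewrite assocl_tens_tmap; last by linearity.
  by rewrite tmap_comp; try linearity; apply: eq_tmap => // y; rewrite gE.
- have imG := image_subspace linG.
  rewrite (lin_basis linM); apply: (subspace_lext imG) => i.
  rewrite (@tens_trowsE _ _ _ (coact M << i >>) (fsts (coact M << i >>))); last exact: fstsP.
  apply: (subspace_sum imG) => k _.
  by exists (dsum_inj F (k, i) (n (k, i))); rewrite gE (wP (k, i)).2.
Qed.

Lemma comodD_coef_space_closed M : comodD dC eC coef_space M -> P M.
Proof.
move=> [HM MD]; have [S [g [PS linG morG ontoG]]] := coef_space_cover HM MD.
have [Q [iota [PQ linI injI morI imI]]] := closed_image PS (@islin_cofree (cI M)) linG morG.
apply: (closed_sub_cofree HM PQ linI injI morI) => x.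
by have [s <-] := ontoG x; apply: imI.
Qed.

Lemma closed_eq_comodD : P = comodD dC eC coef_space.
Proof.
apply: funext => M; apply: propext; split; last exact: comodD_coef_space_closed.
move=> PM; split; first exact: closed_comod.
by move=> x; apply/(in_tensP coef_space_subspace) => i; apply: coef_space_row.
Qed.

End CoefficientSpace.

Unset Implicit Arguments.

Theorem theorem6p1 (K : fieldType) (B J : choiceType)
    (mH : FV K B -> FV K B -> FV K B) (uH : FV K B)
    (dH : FV K B -> FV K (B * B)%type) (eH : FV K B -> K)
    (dC : FV K J -> FV K (J * J)%type) (eC : FV K J -> K)
    (act : FV K B -> FV K J -> FV K J)
    (HH : is_bialgebra mH uH dH eH)
    (HC : is_coalgebra dC eC)
    (HA : is_module_coalgebra mH uH dH eH dC eC act) :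
  (* D |-> M^D maps H-module subcoalgebras to closed M^H-module subcategories *)
  (forall D, is_Hsubcoalg dC act D -> is_closed_Hmod dC eC dH eH act (comodD dC eC D)) /\
  (* injective *)
  (forall D1 D2, is_Hsubcoalg dC act D1 -> is_Hsubcoalg dC act D2 ->
     comodD dC eC D1 = comodD dC eC D2 -> D1 = D2) /\
  (* surjective *)
  (forall P, is_closed_Hmod dC eC dH eH act P ->
     exists D, is_Hsubcoalg dC act D /\ P = comodD dC eC D).
Proof.
have [_ _ _ coalgH _] := HH; have [bilA _ _ comulA counitA] := HA.
split; [|split].
- by move=> D; apply: comodD_closed.
- by move=> D1 D2; apply: comodD_inj.
- move=> P closedP; exists (coef_space P).
  split; first exact: (coef_space_Hsubcoalg coalgH HC bilA closedP).
  exact: (closed_eq_comodD HC closedP).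
Qed.
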